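(* Let $G\in\mathcal{G}_3$ and let $x$ be an interior vertex of $G$, i.e. $S(x)\in\mathcal{S}_2$. For $k\ge0$ let $V_k$ denote the number of complete subgraphs $K_{k+1}$ of $S(x)$. Then the curvature $K(x)=1-\frac{V_0}{2}+\frac{V_1}{3}-\frac{V_2}{4}$ equals $0$.
   Context: All graphs are finite simple graphs $G=(V,E)$. For a vertex $x$, the unit sphere $S(x)$ is the subgraph induced by the neighbors of $x$. A graph is contractible if it is the one-vertex graph $K_1$, or, inductively, if there is a vertex $x$ such that both $S(x)$ and the subgraph induced by $V\setminus\{x\}$ are contractible. Let $\mathcal{G}_0$ be the class of graphs without edges, $\mathcal{S}_0\subset\mathcal{G}_0$ those with exactly two vertices, $\mathcal{B}_0\subset\mathcal{G}_0$ those with exactly one vertex. For $d\ge1$, inductively: $\mathcal{G}_d$ is the class of graphs in which every unit sphere $S(x)$ lies in $\mathcal{S}_{d-1}\cup\mathcal{B}_{d-1}$; the boundary $\delta G$ is the subgraph induced by vertices $x$ with $S(x)\in\mathcal{B}_{d-1}$, and the interior (the other vertices, those with $S(x)\in\mathcal{S}_{d-1}$) is required to be nonempty; $\mathcal{B}_d$ is the class of contractible graphs in $\mathcal{G}_d$ whose boundary lies in $\mathcal{S}_{d-1}$; $\mathcal{S}_d$ is the class of non-contractible graphs in $\mathcal{G}_d$ such that removing any single vertex (with its incident edges) yields a graph in $\mathcal{B}_d$. *)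

(* A finite simple graph is represented as the subgraph
   induced on a vertex set V : {set T} of an ambient graph (T, e) with
   e : rel T symmetric and irreflexive. *)
From mathcomp Require Import all_boot all_order all_algebra.
Set Implicit Arguments. Unset Strict Implicit. Unset Printing Implicit Defensive.

Section Graphs.
Variables (T : finType) (e : rel T).

Definition sphere (V : {set T}) (x : T) : {set T} := [set y in V | e x y].

Inductive contractible : {set T} -> Prop :=
| contr_K1 (x : T) : contractible [set x]
| contr_step (V : {set T}) (x : T) : x \in V -> contractible (sphere V x) ->
    contractible (V :\ x) -> contractible V.

Fixpoint classes (d : nat) :
  ({set T} -> Prop) * ({set T} -> Prop) * ({set T} -> Prop) :=
  match d with
  | 0 =>
    let G := fun V : {set T} => forall x y, x \in V -> y \in V -> ~~ e x y in
    (G, (fun V => G V /\ #|V| = 2), (fun V => G V /\ #|V| = 1))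
  | d'.+1 =>
    let '(_, S', B') := classes d' in
    let G := fun V : {set T} =>
      (forall x, x \in V -> S' (sphere V x) \/ B' (sphere V x)) /\
      (exists x, x \in V /\ S' (sphere V x)) in
    let B := fun V : {set T} =>
      contractible V /\ G V /\
      (exists D : {set T},
         (forall x, x \in D <-> (x \in V /\ B' (sphere V x))) /\ S' D) in
    let S := fun V : {set T} =>
      G V /\ ~ contractible V /\ (forall x, x \in V -> B (V :\ x)) in
    (G, S, B)
  end.

Definition Gcls d := (classes d).1.1.
Definition Scls d := (classes d).1.2.
Definition Bcls d := (classes d).2.

Definition is_clique (A : {set T}) : bool :=
  [forall a in A, forall b in A, (a != b) ==> e a b].

Definition num_cliques (W : {set T}) (k : nat) : nat :=
  #|[set A : {set T} | (A \subset W) && (#|A| == k.+1) && is_clique A]|.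

Local Open Scope ring_scope.
Definition curvature (V : {set T}) (x : T) : rat :=
  let W := sphere V x in
  1 - (num_cliques W 0)%:R / 2 + (num_cliques W 1)%:R / 3
    - (num_cliques W 2)%:R / 4.

End Graphs.

(* Write v0, v1, v2 for the numbers of vertices, edges and triangles of the
   unit sphere W = S(x). Removing a vertex a from a graph changes the reduced
   Euler characteristic by that of S(a), so contractible graphs have reduced
   Euler characteristic 0 and, inductively, every graph of S_d has (-1)^d.
   For W in S_2 this gives v0 - v1 + v2 = 2. Every unit sphere of W lies in
   S_1 and counting each clique of W once per vertex turns the sum of their
   characteristics into 2 v1 = 3 v2. Eliminating v0 and v1 from K(x) gives 0. *)

From mathcomp Require Import all_boot all_order all_algebra.
From mathcomp Require Import lra zify.
Set Implicit Arguments. Unset Strict Implicit. Unset Printing Implicit Defensive.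
Import Order.TTheory GRing.Theory Num.Theory.
Local Open Scope ring_scope.

Section CliqueSums.
Variables (T : finType) (e : rel T).
Hypotheses (e_sym : symmetric e) (e_irr : irreflexive e).

Lemma cliqueP (A : {set T}) :
  reflect {in A &, forall a b, a != b -> e a b} (is_clique e A).
Proof.
apply: (iffP forall_inP) => [cl a b aA bA | cl a aA].
  by move/forall_inP/(_ b bA)/implyP: (cl a aA).
by apply/forall_inP => b bA; apply/implyP; apply: cl.
Qed.

Lemma clique0 : is_clique e set0.
Proof. by apply/cliqueP => a; rewrite inE. Qed.

Lemma sphere_sub (W : {set T}) a : sphere e W a \subset W.
Proof. by apply/subsetP => y; rewrite inE => /andP[]. Qed.

Definition clique_sum (W : {set T}) (f : nat -> int) : int :=
  \sum_(B : {set T} | (B \subset W) && is_clique e B) f #|B|.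

(* [B |-> B :\ a] is a bijection from the cliques of [W] through [a] onto
   the cliques of the unit sphere of [a]. *)
Lemma clique_sum_star (W : {set T}) a (f : nat -> int) : a \in W ->
  \sum_(B : {set T} | [&& B \subset W, is_clique e B & a \in B]) f #|B|
  = clique_sum (sphere e W a) (f \o succn).
Proof.
move=> aW; rewrite (reindex_onto (fun C => a |: C) (fun B => B :\ a)); last first.
  by move=> B /and3P[_ _ aB]; rewrite setD1K.
apply: eq_big => C; last first.
  by move=> /andP[_ /eqP <-]; rewrite /= cardsU1 !inE eqxx.
apply/idP/idP => [/andP[/and3P[sW cl _] /eqP eqC] | /andP[sS cl]].
  have aC : a \notin C by rewrite -eqC !inE eqxx.
  apply/andP; split; last first.
    by apply/cliqueP => u v uC vC; apply: (cliqueP _ cl); rewrite inE ?uC ?vC orbT.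
  apply/subsetP => y yC; rewrite inE (subsetP sW) ?inE ?yC ?orbT //=.
  by apply: (cliqueP _ cl); rewrite ?inE ?eqxx ?yC ?orbT //; apply: contraNneq aC => ->.
have aC : a \notin C by apply/negP => /(subsetP sS); rewrite inE e_irr andbF.
rewrite setU1K // eqxx setU11 !andbT subUset sub1set aW (subset_trans sS) ?sphere_sub //=.
apply/cliqueP => u v; rewrite !inE => /predU1P[-> | uC] /predU1P[-> | vC].
- by rewrite eqxx.
- by move=> _; move: (subsetP sS v vC); rewrite inE => /andP[].
- by move=> _; move: (subsetP sS u uC); rewrite inE e_sym => /andP[].
- exact: (cliqueP _ cl).
Qed.

Lemma clique_sum_split (W : {set T}) a (f : nat -> int) : a \in W ->
  clique_sum W f = clique_sum (W :\ a) f + clique_sum (sphere e W a) (f \o succn).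
Proof.
move=> aW; rewrite -clique_sum_star // /clique_sum (bigID (fun B : {set T} => a \in B)) /= addrC.
congr (_ + _); last by apply: eq_bigl => B; rewrite andbA.
by apply: eq_bigl => B; rewrite subsetD1 andbAC.
Qed.

(* Summing the counts over all unit spheres counts each clique once per vertex. *)
Lemma sum_clique_sum_spheres (W : {set T}) (f : nat -> int) :
  \sum_(a in W) clique_sum (sphere e W a) f
  = clique_sum W (fun n => n%:R * f n.-1).
Proof.
under eq_bigr => a aW do
  rewrite -[clique_sum _ f]/(clique_sum _ ((f \o predn) \o succn)) -clique_sum_star //.
rewrite /clique_sum (exchange_big_dep (fun B : {set T} => (B \subset W) && is_clique e B)) /=;
  last by move=> a B _ /and3P[-> ->].
apply: eq_bigr => B /andP[sBW cl]; rewrite sumr_const mulr_natl.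
congr (_ *+ _); apply: eq_card => a.
by rewrite unfold_in /= sBW cl /= andb_idl // => /(subsetP sBW).
Qed.

Lemma clique_sum_bounded (W : {set T}) n (f : nat -> int) :
  (forall B : {set T}, B \subset W -> is_clique e B -> #|B| <= n)%N ->
  clique_sum W f = \sum_(k < n.+1) f k * clique_sum W (fun m => (m == k)%:R).
Proof.
move=> bnd; rewrite /clique_sum.
under [RHS]eq_bigr do rewrite mulr_sumr.
rewrite exchange_big /=; apply: eq_bigr => B /andP[sBW cl].
rewrite (eq_bigr (fun k : 'I_n.+1 => if #|B| == k then f #|B| else 0)); last first.
  by move=> k _; case: eqP => [-> | _]; rewrite ?mulr1 ?mulr0.
rewrite -big_mkcond (eq_bigl (fun k : 'I_n.+1 => val k == #|B|)) => [|k]; last exact: eq_sym.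
by rewrite (big_ord1_eq _ (fun=> f #|B|)) ltnS bnd.
Qed.

Lemma clique_sum_size0 (W : {set T}) : clique_sum W (fun m => (m == 0)%:R) = 1.
Proof.
rewrite /clique_sum (bigD1 set0) ?sub0set ?clique0 //= cards0 big1 ?addr0 //.
by move=> B /andP[_]; rewrite -cards_eq0 => /negbTE ->.
Qed.

Lemma num_cliquesE (W : {set T}) k :
  (num_cliques e W k)%:Z = clique_sum W (fun m => (m == k.+1)%:R).
Proof.
rewrite /num_cliques -sum1_card -natz natr_sum /clique_sum big_mkcond [RHS]big_mkcond.
apply: eq_bigr => B _; rewrite inE -andbA.
by case: (B \subset W); case: (is_clique e B); case: (#|B| == k.+1).
Qed.

Lemma num_cliques0 (W : {set T}) : num_cliques e W 0 = #|W|.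
Proof.
rewrite /num_cliques -[#|W|](card_imset _ set1_inj); apply: eq_card => A.
rewrite !inE -andbA; apply/and3P/imsetP => [[sAW /cards1P[a Aa] _] | [a aW ->]].
  by exists a; rewrite // -sub1set -Aa.
by rewrite sub1set cards1; split=> //; apply/cliqueP => u v /set1P-> /set1P->; rewrite eqxx.
Qed.

Lemma clique_sum_num_cliques (W : {set T}) n (f : nat -> int) :
  (forall B : {set T}, B \subset W -> is_clique e B -> #|B| <= n)%N ->
  clique_sum W f = f 0%N + \sum_(k < n) f k.+1 * (num_cliques e W k)%:Z.
Proof.
move=> bnd; rewrite (clique_sum_bounded f bnd) big_ord_recl clique_sum_size0 mulr1.
by congr (_ + _); apply: eq_bigr => k _; rewrite num_cliquesE.
Qed.

End CliqueSums.

Section ReducedEuler.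
Variables (T : finType) (e : rel T).
Hypotheses (e_sym : symmetric e) (e_irr : irreflexive e).

(* Summing over all cliques including the empty one gives chi - 1, the
   reduced Euler characteristic. *)
Definition reduced_euler (W : {set T}) : int :=
  clique_sum e W (fun n => (-1) ^+ n.+1).

Lemma reduced_euler_split (W : {set T}) a : a \in W ->
  reduced_euler W = reduced_euler (W :\ a) - reduced_euler (sphere e W a).
Proof.
move=> aW; rewrite /reduced_euler (clique_sum_split e_sym e_irr _ aW) -sumrN.
by congr (_ + _); apply: eq_bigr => B _; rewrite /= exprS mulN1r.
Qed.

Lemma reduced_euler_contractible (W : {set T}) :
  contractible e W -> reduced_euler W = 0.
Proof.
elim=> [x | U x xU _ euS _ euU]; last by rewrite (reduced_euler_split xU) euS euU subrr.
rewrite (reduced_euler_split (set11 x)) [sphere _ _ _](_ : _ = [set x] :\ x) ?subrr //.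
by apply/setP => y; rewrite !inE; case: eqP => [-> | _]; rewrite ?e_irr.
Qed.

Lemma reduced_euler0 : reduced_euler set0 = -1.
Proof.
rewrite /reduced_euler /clique_sum (big_pred1 set0) ?cards0 ?expr1 // => B.
by rewrite subset0 andb_idr // => /eqP ->; apply: clique0.
Qed.

Lemma reduced_euler_edgeless (W : {set T}) :
  {in W &, forall x y, ~~ e x y} -> reduced_euler W = #|W|%:Z - 1.
Proof.
elim: {W}#|W| {-2}W (erefl #|W|) => [|n IH] W cardW noedge.
  by rewrite (cards0_eq cardW) reduced_euler0 cards0.
have [a aW] : {a | a \in W} by apply/sigW/set0Pn; rewrite -card_gt0 cardW.
rewrite (reduced_euler_split aW).
have -> : sphere e W a = set0.
  apply/setP => y; rewrite !inE; apply/negbTE/nandP.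
  by case: (boolP (y \in W)) => yW; [right; apply: noedge | left].
have cardWa : #|W :\ a| = n by move: cardW; rewrite (cardsD1 a) aW => -[].
rewrite reduced_euler0 IH ?cardWa ?cardW //; first lia.
by move=> x y /setD1P[_ xW] /setD1P[_ yW]; apply: noedge.
Qed.

End ReducedEuler.

Section Classes.
Variables (T : finType) (e : rel T).
Hypotheses (e_sym : symmetric e) (e_irr : irreflexive e).

Lemma GclsS d (W : {set T}) : Gcls e d.+1 W <->
  (forall x, x \in W -> Scls e d (sphere e W x) \/ Bcls e d (sphere e W x)) /\
  (exists x, x \in W /\ Scls e d (sphere e W x)).
Proof. by rewrite /Gcls /Scls /Bcls /=; case: (classes e d) => [[G S] B]. Qed.

Lemma SclsS d (W : {set T}) : Scls e d.+1 W <->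
  [/\ Gcls e d.+1 W, ~ contractible e W & forall x, x \in W -> Bcls e d.+1 (W :\ x)].
Proof.
by rewrite /Gcls /Scls /Bcls /=; case: (classes e d) => [[G S] B]; split=> [[? []] | []].
Qed.

Lemma Scls_Gcls d (W : {set T}) : Scls e d W -> Gcls e d W.
Proof. by case: d => [[] | d /SclsS[]]. Qed.

Lemma Bcls_Gcls d (W : {set T}) : Bcls e d W -> Gcls e d W.
Proof.
case: d => [[] // | d]; rewrite /Gcls /Bcls /=.
by case: (classes e d) => [[G S] B] /= [_ []].
Qed.

Lemma Bcls_contractible d (W : {set T}) : Bcls e d W -> contractible e W.
Proof.
case: d => [[_ /eqP/cards1P[x ->]] | d]; first exact: contr_K1.
by rewrite /Bcls /=; case: (classes e d) => [[G S] B] /= [].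
Qed.

Lemma reduced_euler_Scls d (W : {set T}) :
  Scls e d W -> reduced_euler e W = (-1) ^+ d.
Proof.
elim: d W => [W [noedge cardW] | d IH W /SclsS[/GclsS[_ [u [uW Su]]] _ Bdel]].
  by rewrite (reduced_euler_edgeless e_sym e_irr noedge) cardW.
rewrite (reduced_euler_split e_sym e_irr uW).
rewrite (reduced_euler_contractible e_sym e_irr (Bcls_contractible (Bdel u uW))).
by rewrite IH // sub0r exprS mulN1r.
Qed.

(* A ball as a unit sphere would make the reduced Euler characteristic of
   [W] vanish, but it is [+-1]. *)
Lemma Scls_sphere d (W : {set T}) v :
  Scls e d.+1 W -> v \in W -> Scls e d (sphere e W v).
Proof.
move=> SW vW; have /SclsS[/GclsS[/(_ v vW)[] // Bv _] _ Bdel] := SW.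
have := reduced_euler_Scls SW.
rewrite (reduced_euler_split e_sym e_irr vW).
have contr0 := reduced_euler_contractible e_sym e_irr.
rewrite (contr0 _ (Bcls_contractible Bv)) (contr0 _ (Bcls_contractible (Bdel v vW))).
by rewrite subrr => /esym/eqP; rewrite expf_eq0 oppr_eq0 oner_eq0.
Qed.

Lemma Gcls_clique_card d (W B : {set T}) :
  Gcls e d W -> B \subset W -> is_clique e B -> (#|B| <= d.+1)%N.
Proof.
elim: d W B => [W B noedge | d IH W B /GclsS[Wsph _]] sBW /cliqueP cl.
  apply/card_le1_eqP => a b aB bB; apply: contraNeq (cl b a bB aB) _.
  exact: (noedge b a (subsetP sBW b bB) (subsetP sBW a aB)).
have [B0 | [a aB]] := set_0Vmem B; first by rewrite B0 cards0.
have aW := subsetP sBW a aB.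
rewrite (cardsD1 a) aB ltnS (IH (sphere e W a)) //.
- by case: (Wsph a aW) => [/Scls_Gcls | /Bcls_Gcls].
- apply/subsetP => b /setD1P[ba bB]; rewrite inE (subsetP sBW) //=.
  by apply: cl; rewrite // eq_sym.
- by apply/cliqueP => u v /setD1P[_ uB] /setD1P[_ vB]; apply: cl.
Qed.

End Classes.

Section TwoSpheres.
Variables (T : finType) (e : rel T).
Hypotheses (e_sym : symmetric e) (e_irr : irreflexive e).
Variable W : {set T}.
Hypothesis SW : Scls e 2 W.

Lemma clique_sum_sphere2 (U : {set T}) (f : nat -> int) : U \subset W ->
  clique_sum e U f = f 0%N + f 1%N * (num_cliques e U 0)%:Z
    + f 2%N * (num_cliques e U 1)%:Z + f 3%N * (num_cliques e U 2)%:Z.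
Proof.
move=> sUW; rewrite (@clique_sum_num_cliques _ _ _ 3) => [|B sBU cl].
  by rewrite !big_ord_recl big_ord0 addr0 !addrA.
exact: Gcls_clique_card (Scls_Gcls SW) (subset_trans sBU sUW) cl.
Qed.

Lemma euler_sphere2 :
  (num_cliques e W 0 + num_cliques e W 2 = 2 + num_cliques e W 1)%N.
Proof.
move: (reduced_euler_Scls e_sym e_irr SW).
by rewrite /reduced_euler clique_sum_sphere2 // !exprS expr0; lia.
Qed.

(* Each unit sphere is a circle, of reduced Euler characteristic [-1]; summing
   over all vertices gives [- v0 = - v0 + 2 v1 - 3 v2]. *)
Lemma edges_triangles_sphere2 :
  (2 * num_cliques e W 1 = 3 * num_cliques e W 2)%N.
Proof.
have sum_links : \sum_(a in W) reduced_euler e (sphere e W a) = - #|W|%:Z.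
  rewrite (eq_bigr (fun=> -1)) => [|a aW]; first by rewrite sumr_const mulNrn natz.
  by rewrite (reduced_euler_Scls e_sym e_irr (Scls_sphere e_sym e_irr SW aW)).
move: sum_links; rewrite /reduced_euler sum_clique_sum_spheres // clique_sum_sphere2 //=.
by rewrite -(num_cliques0 e) !exprS expr0; lia.
Qed.

End TwoSpheres.

Theorem mainTheorem4 (T : finType) (e : rel T)
  (e_sym : symmetric e) (e_irr : irreflexive e)
  (V : {set T}) (x : T) :
  Gcls e 3 V -> x \in V -> Scls e 2 (sphere e V x) ->
  curvature e V x = 0%R.
Proof.
move=> _ _ SW; rewrite /curvature.
have /(congr1 (fun n : nat => n%:R : rat)) /= := euler_sphere2 e_sym e_irr SW.
have /(congr1 (fun n : nat => n%:R : rat)) /= := edges_triangles_sphere2 e_sym e_irr SW.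
rewrite !natrM !natrD; lra.
Qed.
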